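(* Let $\lambda_1,\lambda_2>0$ and let $X\sim\mathrm{Pois}(\lambda_1)$ and $Y\sim\mathrm{Pois}(\lambda_2)$ be independent Poisson random variables. For $n\ge1$ let $p_n=\mathbb{P}(XY\ge n)$. Then \[ p_n=\sqrt{2\pi}\,n^{1/4}\exp\bigl(-\sqrt{n}\,\log n+O(\sqrt{n})\bigr),\qquad n\to\infty. \] In particular, $\log p_n=-\sqrt{n}\,\log n+O(\sqrt{n})$.
   Context: $\log$ denotes the natural logarithm. $\mathrm{Pois}(\lambda)$ is the Poisson distribution with mean $\lambda$. *)

From Stdlib Require Import Reals Lra Lia Arith.
From Coquelicot Require Import Coquelicot.
Open Scope R_scope.

Definition pois_pmf (lam : R) (k : nat) : R :=
  exp (- lam) * lam ^ k / INR (fact k).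

(* Joint pmf of independent X ~ Pois(l1), Y ~ Pois(l2): P(X=j, Y=k)
   = P(X=j) P(Y=k).  Hence
   p_n = P(XY >= n) = sum_{j,k >= 0, j*k >= n} P(X=j) P(Y=k),
   written as an iterated series of nonnegative terms. *)
Definition prod_tail (l1 l2 : R) (n : nat) : R :=
  Series (fun j : nat =>
    Series (fun k : nat =>
      if Nat.leb n (j * k) then pois_pmf l1 j * pois_pmf l2 k else 0)).

From Stdlib Require Import Reals Lra Lia Arith.
From Coquelicot Require Import Coquelicot.
Open Scope R_scope.

(* If [j k >= n] then [j^j k^k >= sqrt(n)^(j+k)], so with [c = e max(l1, l2)] the bound
   [P(X = j) <= (c / j)^j] gives [P(X = j) P(Y = k) <= (c / sqrt n)^(j+k)]; as moreover
   [j + k >= 2 sqrt n], summing over all such [(j, k)] yields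
   [p_n <= 4 (2c / sqrt n)^(2 sqrt n)] once [sqrt n >= 2c].  Conversely the single term
   [j = k = floor(sqrt n) + 1] together with [m! <= m^m] gives
   [log p_n >= - sqrt n log n - O(sqrt n)].  The first form of the statement follows by
   absorbing [log sqrt(2 pi) + log(n) / 4 = O(sqrt n)] into the error term. *)

Lemma Series_ge0 (a : nat -> R) :
  ex_series a -> (forall k, 0 <= a k) -> 0 <= Series a.
Proof.
  intros a_ex a_ge0.
  replace 0 with (Series (fun k => 0 * a k)) by (rewrite Series_scal_l; ring).
  apply Series_le; auto.
  intros k; specialize (a_ge0 k); lra.
Qed.

Lemma Series_ge_term (a : nat -> R) (m : nat) :
  ex_series a -> (forall k, 0 <= a k) -> a m <= Series a.
Proof.
  intros a_ex a_ge0.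
  rewrite (Series_incr_n a (S m)) by (lia || auto); simpl pred.
  assert (0 <= Series (fun k => a (S m + k)%nat)).
  { apply Series_ge0; auto. now apply (ex_series_incr_n a (S m)). }
  assert (a m <= sum_f_R0 a m).
  { destruct m as [|m]; simpl; [lra|].
    assert (0 <= sum_f_R0 a m) by (apply cond_pos_sum; auto). lra. }
  lra.
Qed.

Lemma ex_series_geom_half (c : R) : ex_series (fun k => c * (/ 2) ^ k).
Proof.
  apply (ex_series_scal_l c (fun k => (/ 2) ^ k)).
  apply ex_series_geom. rewrite Rabs_pos_eq; lra.
Qed.

Lemma Series_geom_half (c : R) : Series (fun k => c * (/ 2) ^ k) = 2 * c.
Proof.
  rewrite Series_scal_l, Series_geom by (rewrite Rabs_pos_eq; lra). field.
Qed.

Section GeomDominatedDoubleSeries.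

Variables (a : nat -> nat -> R) (B : R).
Hypothesis a_bounds : forall j k, 0 <= a j k <= B * (/ 2) ^ j * (/ 2) ^ k.

Lemma ex_series_row (j : nat) : ex_series (a j).
Proof.
  apply (ex_series_le (a j) (fun k => B * (/ 2) ^ j * (/ 2) ^ k)).
  - intros k. destruct (a_bounds j k). now rewrite Rabs_pos_eq.
  - apply ex_series_geom_half.
Qed.

Lemma Series_row_bounds (j : nat) : 0 <= Series (a j) <= 2 * B * (/ 2) ^ j.
Proof.
  split.
  - apply Series_ge0; [apply ex_series_row | intros k; apply a_bounds].
  - rewrite Rmult_assoc, <- (Series_geom_half (B * (/ 2) ^ j)).
    apply Series_le; [apply a_bounds | apply ex_series_geom_half].
Qed.

Lemma ex_series_double : ex_series (fun j => Series (a j)).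
Proof.
  apply (ex_series_le (fun j => Series (a j)) (fun j => 2 * B * (/ 2) ^ j)).
  - intros j. destruct (Series_row_bounds j).
    change (Rabs (Series (a j)) <= 2 * B * (/ 2) ^ j). now rewrite Rabs_pos_eq.
  - apply ex_series_geom_half.
Qed.

Lemma Series_double_le : Series (fun j => Series (a j)) <= 4 * B.
Proof.
  replace (4 * B) with (Series (fun j => 2 * B * (/ 2) ^ j))
    by (rewrite Series_geom_half; ring).
  apply Series_le; [apply Series_row_bounds | apply ex_series_geom_half].
Qed.

Lemma Series_double_ge_term (j k : nat) : a j k <= Series (fun j => Series (a j)).
Proof.
  apply Rle_trans with (Series (a j)).
  - apply Series_ge_term; [apply ex_series_row | intros i; apply a_bounds].
  - apply (Series_ge_term (fun j => Series (a j)));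
      [apply ex_series_double | intros i; apply Series_row_bounds].
Qed.

End GeomDominatedDoubleSeries.

Lemma pois_pmf_pos (l : R) (j : nat) : 0 < l -> 0 < pois_pmf l j.
Proof.
  intros l_pos. unfold pois_pmf.
  apply Rdiv_lt_0_compat; [apply Rmult_lt_0_compat | apply INR_fact_lt_0].
  - apply exp_pos.
  - now apply pow_lt.
Qed.

Lemma pow_div_fact_le_exp (x : R) (j : nat) :
  0 <= x -> x ^ j / INR (fact j) <= exp x.
Proof.
  intros x_ge0. apply Rle_trans with (2 := exp_ge_taylor x j x_ge0).
  set (t k := x ^ k / INR (fact k)).
  assert (t_ge0 : forall k, 0 <= t k).
  { intros k. apply Rle_mult_inv_pos; [now apply pow_le | apply INR_fact_lt_0]. }
  change (t j <= sum_f_R0 t j).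
  destruct j as [|j]; simpl; [lra|].
  assert (0 <= sum_f_R0 t j) by (apply cond_pos_sum; auto). lra.
Qed.

(* From [j^j / j! <= e^j]. *)
Lemma pois_pmf_le (l c : R) (j : nat) : 0 < l -> l * exp 1 <= c -> (1 <= j)%nat ->
  pois_pmf l j <= (c / INR j) ^ j.
Proof.
  intros l_pos le_c j_ge1.
  assert (j_pos : 0 < INR j) by (apply lt_0_INR; lia).
  assert (fact_pos := INR_fact_lt_0 j).
  assert (jj_pos : 0 < INR j ^ j) by now apply pow_lt.
  assert (exp_j : exp (INR j) = exp 1 ^ j).
  { rewrite <- Rpower_pow by apply exp_pos. unfold Rpower. now rewrite ln_exp, Rmult_1_r. }
  assert (inv_fact_le : / INR (fact j) <= exp 1 ^ j / INR j ^ j).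
  { rewrite <- exp_j. apply (Rmult_le_reg_r (INR j ^ j)); [easy|].
    unfold Rdiv. rewrite Rmult_assoc, Rinv_l, Rmult_1_r by lra.
    rewrite Rmult_comm. now apply pow_div_fact_le_exp, Rlt_le. }
  assert (exp_neg_le1 : exp (- l) <= 1).
  { rewrite <- exp_0. left. apply exp_increasing. lra. }
  apply Rle_trans with (l ^ j * / INR (fact j)).
  { unfold pois_pmf, Rdiv. rewrite Rmult_assoc.
    rewrite <- (Rmult_1_l (l ^ j * / INR (fact j))) at 2.
    apply Rmult_le_compat_r; [|easy].
    apply Rmult_le_pos; [now apply pow_le, Rlt_le | now apply Rlt_le, Rinv_0_lt_compat]. }
  apply Rle_trans with ((l * exp 1 / INR j) ^ j).
  { unfold Rdiv. rewrite !Rpow_mult_distr, pow_inv, Rmult_assoc.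
    apply Rmult_le_compat_l; [now apply pow_le, Rlt_le | easy]. }
  apply pow_incr. split.
  - apply Rle_mult_inv_pos; [apply Rmult_le_pos; [lra | apply Rlt_le, exp_pos] | easy].
  - apply Rmult_le_compat_r; [now apply Rlt_le, Rinv_0_lt_compat | easy].
Qed.

Lemma fact_le_pow (m : nat) : INR (fact m) <= INR m ^ m.
Proof.
  induction m as [|m IH]; [simpl; lra|].
  change (INR (S m * fact m) <= INR (S m) * INR (S m) ^ m).
  rewrite mult_INR. apply Rmult_le_compat_l; [apply pos_INR|].
  apply Rle_trans with (1 := IH). apply pow_incr. split; [apply pos_INR | apply le_INR; lia].
Qed.

Lemma ln_pois_pmf_ge (l : R) (m : nat) : 0 < l -> (1 <= m)%nat ->
  - l + INR m * ln l - INR m * ln (INR m) <= ln (pois_pmf l m).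
Proof.
  intros l_pos m_ge1. unfold pois_pmf.
  assert (fact_pos := INR_fact_lt_0 m).
  assert (m_pos : 0 < INR m) by (apply lt_0_INR; lia).
  assert (ln_fact_le : ln (INR (fact m)) <= INR m * ln (INR m)).
  { rewrite <- ln_pow by easy. apply ln_le; [easy | apply fact_le_pow]. }
  rewrite ln_div, ln_mult, ln_exp, ln_pow; try easy.
  - lra.
  - apply exp_pos.
  - now apply pow_lt.
  - apply Rmult_lt_0_compat; [apply exp_pos | now apply pow_lt].
Qed.

Lemma sqrt_pow_add_le_of_le (n j k : nat) : (j <= k)%nat -> (n <= j * k)%nat ->
  sqrt (INR n) ^ (j + k) <= INR j ^ j * INR k ^ k.
Proof.
  intros le_jk le_n.
  set (s := sqrt (INR n)).
  assert (s_ge0 : 0 <= s) by apply sqrt_pos.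
  assert (s_sq : s ^ 2 = INR n) by (unfold s; rewrite <- Rsqr_pow2; apply Rsqr_sqrt, pos_INR).
  assert (s_le_k : s <= INR k).
  { rewrite <- (sqrt_square (INR k)) by apply pos_INR.
    apply sqrt_le_1_alt. rewrite <- mult_INR. apply le_INR. nia. }
  replace (j + k)%nat with (2 * j + (k - j))%nat by lia.
  replace (INR k ^ k) with (INR k ^ j * INR k ^ (k - j))
    by (rewrite <- pow_add; f_equal; lia).
  rewrite pow_add, <- Rmult_assoc, <- Rpow_mult_distr, pow_mult, s_sq.
  apply Rmult_le_compat.
  - apply pow_le, pos_INR.
  - now apply pow_le.
  - apply pow_incr. split; [apply pos_INR|]. rewrite <- mult_INR. now apply le_INR.
  - now apply pow_incr.
Qed.

Lemma sqrt_pow_add_le (n j k : nat) : (n <= j * k)%nat ->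
  sqrt (INR n) ^ (j + k) <= INR j ^ j * INR k ^ k.
Proof.
  intros le_n. destruct (le_lt_dec j k).
  - now apply sqrt_pow_add_le_of_le.
  - rewrite Nat.add_comm, Rmult_comm. apply sqrt_pow_add_le_of_le; lia.
Qed.

Lemma two_sqrt_le_add (n j k : nat) : (n <= j * k)%nat -> 2 * sqrt (INR n) <= INR (j + k).
Proof.
  intros le_n.
  rewrite <- (sqrt_square 2), <- sqrt_mult, <- (sqrt_square (INR (j + k))) by
    (lra || apply pos_INR).
  apply sqrt_le_1_alt. rewrite <- !mult_INR.
  replace (2 * 2) with (INR 4) by (simpl; ring). rewrite <- mult_INR.
  apply le_INR.
  assert (am_gm : (4 * (j * k) <= (j + k) * (j + k))%nat).
  { destruct (le_lt_dec j k); [replace k with (j + (k - j))%nat by lia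
                             | replace j with (k + (j - k))%nat by lia]; nia. }
  lia.
Qed.

Lemma pow_le_Rpower (x y : R) (m : nat) : 0 < x <= 1 -> y <= INR m ->
  x ^ m <= Rpower x y.
Proof.
  intros x_range le_y.
  rewrite <- Rpower_pow by lra. unfold Rpower.
  assert (ln x <= 0) by (rewrite <- ln_1; apply ln_le; lra).
  destruct (Rle_lt_or_eq_dec (INR m * ln x) (y * ln x)) as [lt | ->]; [nra | |lra].
  now left; apply exp_increasing.
Qed.

Lemma pois_pmf_mul_le (l1 l2 c : R) (n j k : nat) :
  0 < l1 -> 0 < l2 -> l1 * exp 1 <= c -> l2 * exp 1 <= c -> (1 <= n)%nat ->
  (n <= j * k)%nat ->
  pois_pmf l1 j * pois_pmf l2 k <= (c / sqrt (INR n)) ^ (j + k).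
Proof.
  intros l1_pos l2_pos le_c1 le_c2 n_ge1 le_n.
  assert (j_pos : 0 < INR j) by (apply lt_0_INR; destruct j; lia).
  assert (k_pos : 0 < INR k) by (apply lt_0_INR; destruct k; lia).
  assert (s_pos : 0 < sqrt (INR n)) by (apply sqrt_lt_R0, lt_0_INR; lia).
  assert (c_pos : 0 < c) by (pose proof (exp_pos 1); nra).
  apply Rle_trans with ((c / INR j) ^ j * (c / INR k) ^ k).
  { apply Rmult_le_compat; try (apply Rlt_le, pois_pmf_pos; easy);
      apply pois_pmf_le; (easy || destruct j, k; lia). }
  unfold Rdiv. rewrite !Rpow_mult_distr, !pow_inv, pow_add.
  replace (c ^ j * / INR j ^ j * (c ^ k * / INR k ^ k))
    with (c ^ j * c ^ k * / (INR j ^ j * INR k ^ k)) by (rewrite Rinv_mult; ring).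
  apply Rmult_le_compat_l.
  - apply Rmult_le_pos; apply pow_le; lra.
  - apply Rinv_le_contravar; [now apply pow_lt | now apply sqrt_pow_add_le].
Qed.

(* Splitting [q^(j+k) = (2q)^(j+k) 2^-(j+k)] trades the decay in [j + k >= 2 sqrt n]
   for a summable geometric weight. *)
Lemma pois_pmf_mul_le_geom (l1 l2 c : R) (n j k : nat) :
  0 < l1 -> 0 < l2 -> l1 * exp 1 <= c -> l2 * exp 1 <= c -> (1 <= n)%nat ->
  2 * c <= sqrt (INR n) -> (n <= j * k)%nat ->
  pois_pmf l1 j * pois_pmf l2 k
    <= Rpower (2 * c / sqrt (INR n)) (2 * sqrt (INR n)) * (/ 2) ^ j * (/ 2) ^ k.
Proof.
  intros l1_pos l2_pos le_c1 le_c2 n_ge1 large_n le_n.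
  set (s := sqrt (INR n)) in *.
  assert (s_pos : 0 < s) by (apply sqrt_lt_R0, lt_0_INR; lia).
  assert (c_pos : 0 < c) by (pose proof (exp_pos 1); nra).
  apply Rle_trans with (1 := pois_pmf_mul_le l1 l2 c n j k l1_pos l2_pos le_c1 le_c2 n_ge1 le_n).
  fold s. rewrite Rmult_assoc, <- pow_add.
  replace ((c / s) ^ (j + k)) with ((2 * c / s) ^ (j + k) * (/ 2) ^ (j + k))
    by (rewrite <- Rpow_mult_distr; f_equal; field; lra).
  apply Rmult_le_compat_r; [apply pow_le; lra|].
  apply pow_le_Rpower; [|now apply two_sqrt_le_add].
  split; [apply Rdiv_lt_0_compat; lra|].
  apply Rmult_le_reg_r with s; [easy|]. unfold Rdiv. rewrite Rmult_assoc, Rinv_l; lra.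
Qed.

Section PoissonProductTail.

Variables (l1 l2 : R) (n : nat).
Hypotheses (l1_pos : 0 < l1) (l2_pos : 0 < l2) (n_ge1 : (1 <= n)%nat).

Let c := Rmax l1 l2 * exp 1.
Let s := sqrt (INR n).
Hypothesis large_n : 2 * c <= s.

Let tail_term (j k : nat) : R :=
  if Nat.leb n (j * k) then pois_pmf l1 j * pois_pmf l2 k else 0.

Lemma tail_term_bounds (j k : nat) :
  0 <= tail_term j k <= Rpower (2 * c / s) (2 * s) * (/ 2) ^ j * (/ 2) ^ k.
Proof.
  assert (geom_ge0 : 0 <= Rpower (2 * c / s) (2 * s) * (/ 2) ^ j * (/ 2) ^ k).
  { unfold Rpower. apply Rmult_le_pos; [apply Rmult_le_pos|];
      [apply Rlt_le, exp_pos | apply pow_le; lra..]. }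
  unfold tail_term. destruct (Nat.leb n (j * k)) eqn:le_n; [|lra].
  apply Nat.leb_le in le_n. split.
  - apply Rmult_le_pos; apply Rlt_le, pois_pmf_pos; easy.
  - apply pois_pmf_mul_le_geom; try easy;
      apply Rmult_le_compat_r; (apply Rlt_le, exp_pos || apply Rmax_l || apply Rmax_r).
Qed.

Lemma prod_tail_le : prod_tail l1 l2 n <= 4 * Rpower (2 * c / s) (2 * s).
Proof. exact (Series_double_le tail_term _ tail_term_bounds). Qed.

Lemma prod_tail_ge (m : nat) : (n <= m * m)%nat ->
  pois_pmf l1 m * pois_pmf l2 m <= prod_tail l1 l2 n.
Proof.
  intros le_n.
  apply Rle_trans with (2 := Series_double_ge_term tail_term _ tail_term_bounds m m).
  unfold tail_term. apply Nat.leb_le in le_n. rewrite le_n. lra.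
Qed.

End PoissonProductTail.

Lemma nat_sqrt_succ_bounds (n : nat) :
  (n <= S (Nat.sqrt n) * S (Nat.sqrt n))%nat /\ INR (S (Nat.sqrt n)) <= sqrt (INR n) + 1.
Proof.
  destruct (Nat.sqrt_spec n) as [sqrt_le lt_sqrt]; [lia|].
  split; [lia|].
  rewrite S_INR. apply Rplus_le_compat_r.
  rewrite <- (sqrt_square (INR (Nat.sqrt n))) by apply pos_INR.
  apply sqrt_le_1_alt. rewrite <- mult_INR. now apply le_INR.
Qed.

Lemma ln_le_sub1 (y : R) : 0 < y -> ln y <= y - 1.
Proof.
  intros y_pos. pose proof (exp_ineq1_le (ln y)). rewrite exp_ln in *; lra.
Qed.

Lemma ln_eq_2_ln_sqrt (x : R) : 0 < x -> ln x = 2 * ln (sqrt x).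
Proof.
  intros x_pos. rewrite <- (sqrt_sqrt x) at 1 by lra.
  rewrite ln_mult by (apply sqrt_lt_R0; lra). ring.
Qed.

Lemma mul_ln_le (x s : R) : 1 <= s -> 1 <= x <= s + 1 -> x * ln x <= s * ln s + 2 * s.
Proof.
  intros s_ge1 x_range.
  assert (ln_x_ge0 : 0 <= ln x) by (rewrite <- ln_1; apply ln_le; lra).
  assert (ln_s_le : ln s <= s - 1) by (apply ln_le_sub1; lra).
  assert (ln_x_le : ln x <= 1 + ln s).
  { apply Rle_trans with (ln (2 * s)); [apply ln_le; lra|].
    rewrite ln_mult by lra. pose proof (ln_le_sub1 2). lra. }
  nra.
Qed.

Lemma Rmax_mul_exp1_pos (l1 l2 : R) : 0 < l1 -> 0 < Rmax l1 l2 * exp 1.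
Proof.
  intros l1_pos. apply Rmult_lt_0_compat; [|apply exp_pos].
  apply Rlt_le_trans with l1; [easy | apply Rmax_l].
Qed.

Section LogTailBounds.

Variables (l1 l2 : R) (n : nat).
Hypotheses (l1_pos : 0 < l1) (l2_pos : 0 < l2) (n_ge1 : (1 <= n)%nat).

Let c := Rmax l1 l2 * exp 1.
Let s := sqrt (INR n).
Hypothesis large_n : 2 * c <= s.

Let n_pos : 0 < INR n.
Proof. apply lt_0_INR; lia. Qed.

Let s_ge1 : 1 <= s.
Proof. rewrite <- sqrt_1. apply sqrt_le_1_alt, (le_INR 1); lia. Qed.

Lemma prod_tail_lower : 0 < prod_tail l1 l2 n /\
  - (l1 + l2 + 2 * Rabs (ln l1 + ln l2) + 4) * s
    <= ln (prod_tail l1 l2 n) + s * ln (INR n).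
Proof.
  set (m := S (Nat.sqrt n)).
  destruct (nat_sqrt_succ_bounds n) as [le_n m_le]. fold m s in le_n, m_le.
  assert (m_ge1 : 1 <= INR m) by (apply (le_INR 1); unfold m; lia).
  assert (pmf_pos1 := pois_pmf_pos l1 m l1_pos).
  assert (pmf_pos2 := pois_pmf_pos l2 m l2_pos).
  assert (tail_ge := prod_tail_ge l1 l2 n l1_pos l2_pos n_ge1 large_n m le_n).
  assert (tail_pos : 0 < prod_tail l1 l2 n) by (pose proof (Rmult_lt_0_compat _ _ pmf_pos1 pmf_pos2); lra).
  split; [easy|].
  assert (ln_tail_ge : ln (pois_pmf l1 m) + ln (pois_pmf l2 m) <= ln (prod_tail l1 l2 n)).
  { rewrite <- ln_mult by easy. apply ln_le; [now apply Rmult_lt_0_compat | easy]. }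
  pose proof (ln_pois_pmf_ge l1 m l1_pos ltac:(unfold m; lia)).
  pose proof (ln_pois_pmf_ge l2 m l2_pos ltac:(unfold m; lia)).
  pose proof (mul_ln_le (INR m) s s_ge1 ltac:(lra)).
  pose proof (Rabs_pos (ln l1 + ln l2)).
  assert (ln_l_ge : - Rabs (ln l1 + ln l2) * (s + 1) <= INR m * (ln l1 + ln l2)).
  { assert (- (ln l1 + ln l2) <= Rabs (ln l1 + ln l2)) by (rewrite <- Rabs_Ropp; apply Rle_abs).
    nra. }
  rewrite (ln_eq_2_ln_sqrt (INR n) n_pos). fold s. nra.
Qed.

Lemma prod_tail_upper :
  ln (prod_tail l1 l2 n) + s * ln (INR n) <= (3 + 2 * Rabs (ln (2 * c))) * s.
Proof.
  destruct prod_tail_lower as [tail_pos _].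
  assert (c_pos : 0 < c) by now apply Rmax_mul_exp1_pos.
  assert (ln_tail_le : ln (prod_tail l1 l2 n) <= ln 4 + 2 * s * (ln (2 * c) - ln s)).
  { rewrite <- ln_div, <- ln_Rpower, <- ln_mult by (lra || apply exp_pos).
    apply ln_le; [easy | now apply prod_tail_le]. }
  pose proof (ln_le_sub1 4).
  pose proof (Rle_abs (ln (2 * c))).
  rewrite (ln_eq_2_ln_sqrt (INR n) n_pos). fold s. nra.
Qed.

End LogTailBounds.

Lemma ln_prod_tail_asymptotics (l1 l2 : R) : 0 < l1 -> 0 < l2 ->
  exists (C : R) (N : nat), forall n : nat, (1 <= n)%nat -> (N <= n)%nat ->
    0 < prod_tail l1 l2 n /\
    Rabs (ln (prod_tail l1 l2 n) + sqrt (INR n) * ln (INR n)) <= C * sqrt (INR n).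
Proof.
  intros l1_pos l2_pos.
  set (c := Rmax l1 l2 * exp 1).
  assert (c_pos : 0 < c) by now apply Rmax_mul_exp1_pos.
  destruct (INR_unbounded ((2 * c) ^ 2)) as [N lt_N].
  exists ((l1 + l2 + 2 * Rabs (ln l1 + ln l2) + 4) + (3 + 2 * Rabs (ln (2 * c)))), N.
  intros n n_ge1 le_N.
  assert (large_n : 2 * c <= sqrt (INR n)).
  { rewrite <- (sqrt_pow2 (2 * c)) by lra.
    apply sqrt_le_1_alt. apply Rlt_le, Rlt_le_trans with (1 := lt_N). now apply le_INR. }
  destruct (prod_tail_lower l1 l2 n l1_pos l2_pos n_ge1 large_n) as [tail_pos lower].
  pose proof (prod_tail_upper l1 l2 n l1_pos l2_pos n_ge1 large_n) as upper.
  fold c in upper.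
  split; [easy|].
  pose proof (Rabs_pos (ln l1 + ln l2)). pose proof (Rabs_pos (ln (2 * c))).
  assert (0 <= (l1 + l2 + 2 * Rabs (ln l1 + ln l2) + 4) * sqrt (INR n))
    by (apply Rmult_le_pos; [lra | apply sqrt_pos]).
  assert (0 <= (3 + 2 * Rabs (ln (2 * c))) * sqrt (INR n))
    by (apply Rmult_le_pos; [lra | apply sqrt_pos]).
  apply Rabs_le. split; lra.
Qed.

Theorem theorem2 (l1 l2 : R) (hl1 : 0 < l1) (hl2 : 0 < l2) :
  (exists (C : R) (N : nat), forall n : nat, (1 <= n)%nat -> (N <= n)%nat ->
     exists e : R, Rabs e <= C * sqrt (INR n) /\
       prod_tail l1 l2 n =
         sqrt (2 * PI) * Rpower (INR n) (1 / 4)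
           * exp (- sqrt (INR n) * ln (INR n) + e))
  /\
  (exists (C : R) (N : nat), forall n : nat, (1 <= n)%nat -> (N <= n)%nat ->
     Rabs (ln (prod_tail l1 l2 n) + sqrt (INR n) * ln (INR n))
       <= C * sqrt (INR n)).
Proof.
  destruct (ln_prod_tail_asymptotics l1 l2 hl1 hl2) as [C [N asymp]].
  split; [|exists C, N; apply asymp].
  set (a := ln (sqrt (2 * PI))).
  exists (C + Rabs a + 1), N. intros n n_ge1 le_N.
  destruct (asymp n n_ge1 le_N) as [tail_pos tail_bound].
  set (s := sqrt (INR n)) in *. set (p := prod_tail l1 l2 n) in *.
  exists (ln p + s * ln (INR n) - a - ln (INR n) / 4). split.
  - assert (n_pos : 0 < INR n) by (apply lt_0_INR; lia).
    assert (s_ge1 : 1 <= s) by (rewrite <- sqrt_1; apply sqrt_le_1_alt, (le_INR 1); lia).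
    assert (0 <= ln s) by (rewrite <- ln_1; apply ln_le; lra).
    assert (ln s <= s - 1) by (apply ln_le_sub1; lra).
    rewrite (ln_eq_2_ln_sqrt (INR n) n_pos) in tail_bound |- *. fold s in tail_bound |- *.
    apply Rabs_le_between in tail_bound.
    pose proof (Rle_abs a). pose proof (Rle_abs (- a)). rewrite Rabs_Ropp in *.
    apply Rabs_le. nra.
  - assert (sqrt_pos : 0 < sqrt (2 * PI)) by (apply sqrt_lt_R0; pose proof PI_RGT_0; lra).
    unfold Rpower. rewrite <- (exp_ln (sqrt (2 * PI))) by easy. fold a.
    rewrite <- !exp_plus, <- (exp_ln p) at 1 by easy.
    f_equal. field.
Qed.
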